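(* Let $\mathcal{F}\subseteq\mathcal{O}$ be a normal family of objects and let $(M_p)_{p\in\mathcal{F}}$ be the Voronoi partition of $V(G)$ with respect to $\mathcal{F}$. Then for every $p\in\mathcal{F}$ and every $v\in M_p$, the unique shortest path from $v$ to $\mathrm{loc}(p)$ is entirely contained in $M_p$. In particular, $G[M_p]$ is connected.
   Context: $G$ is a connected graph with positive edge weights; $\mathrm{dist}(X,Y)$ denotes the minimum weight of a path between a vertex of $X$ and a vertex of $Y$. Each object $p\in\mathcal{O}$ has a location $\mathrm{loc}(p)$, a nonempty vertex set inducing a connected subgraph, and a radius $\mathrm{rad}(p)\ge 0$. A family $\mathcal{F}$ is normal if locations of its members are pairwise disjoint and $\mathrm{dist}(\mathrm{loc}(p_1),\mathrm{loc}(p_2))>\mathrm{rad}(p_1)-\mathrm{rad}(p_2)$ for all ordered pairs of distinct $p_1,p_2\in\mathcal{F}$. Standing assumption: all values $\mathrm{dist}(u,v)$ and $\mathrm{dist}(u,v)-\mathrm{rad}(p)$ ($u,v\in V(G)$, $p\in\mathcal{O}$) are pairwise different and shortest paths between vertices are unique. The Voronoi partition assigns $v\in V(G)$ to $M_{p_0}$ iff $\mathrm{dist}(v,\mathrm{loc}(p_0))-\mathrm{rad}(p_0)$ is the smallest among the values $\mathrm{dist}(v,\mathrm{loc}(p))-\mathrm{rad}(p)$, $p\in\mathcal{F}$. The shortest path from $v$ to $\mathrm{loc}(p)$ is the minimum-weight path from $v$ to a vertex of $\mathrm{loc}(p)$. *)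

From mathcomp Require Import all_boot all_order all_algebra.
From mathcomp Require Import boolp classical_sets reals.
Set Implicit Arguments. Unset Strict Implicit. Unset Printing Implicit Defensive.
Import Order.TTheory GRing.Theory Num.Theory.
Local Open Scope ring_scope.

Section Graph.
Variables (R : realType) (V : finType) (e : rel V) (w : V -> V -> R).

Fixpoint wt (u : V) (s : seq V) : R :=
  if s is x :: s' then w u x + wt x s' else 0.

Definition walk (u v : V) (s : seq V) : Prop := path e u s /\ last u s = v.

Definition weighted_connected_graph : Prop :=
  [/\ symmetric e, irreflexive e,
      (forall x y, w x y = w y x),
      (forall x y, e x y -> 0 < w x y) &
      (forall u v, exists s, walk u v s)].

Definition dist (u v : V) : R :=
  inf [set r | exists s, walk u v s /\ r = wt u s]%classic.

Definition distS (X Y : {set V}) : R :=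
  inf [set r | exists x s, [/\ x \in X, path e x s, last x s \in Y & r = wt x s]]%classic.

Definition shortest (u v : V) (s : seq V) : Prop := walk u v s /\ wt u s = dist u v.

Definition shortest_to (v : V) (X : {set V}) (s : seq V) : Prop :=
  [/\ path e v s, last v s \in X & wt v s = distS [set v] X].

(* X induces a connected subgraph (X nonempty is required separately) *)
Definition induces_connected (X : {set V}) : Prop :=
  forall x y, x \in X -> y \in X ->
    exists s, walk x y s /\ all (fun z => z \in X) s.

Variables (O : finType) (loc : O -> {set V}) (rad : O -> R).

Definition valid_objects : Prop :=
  forall p, [/\ (exists x, x \in loc p), induces_connected (loc p) & 0 <= rad p].

Definition normal (F : {set O}) : Prop :=
  forall p1 p2, p1 \in F -> p2 \in F -> p1 != p2 ->
    [disjoint loc p1 & loc p2] /\ rad p1 - rad p2 < distS (loc p1) (loc p2).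

Definition voronoi (F : {set O}) (p : O) : {set V} :=
  [set v | asbool (p \in F /\ forall q, q \in F ->
       distS [set v] (loc p) - rad p <= distS [set v] (loc q) - rad q)].

Definition generic : Prop :=
  [/\
      (forall u v u' v', u != v -> u' != v' ->
         dist u v = dist u' v' -> (u = u' /\ v = v') \/ (u = v' /\ v = u')),
      (forall u v u' v' p p', dist u v - rad p = dist u' v' - rad p' ->
         p = p' /\ ((u = v /\ u' = v') \/ (u = u' /\ v = v') \/ (u = v' /\ v = u'))),
      (forall u v u' v' p, 0 < rad p -> dist u v <> dist u' v' - rad p) &
      (forall u v s t, shortest u v s -> shortest u v t -> s = t)].

End Graph.

From mathcomp Require Import all_boot all_order all_algebra.
From mathcomp Require Import boolp classical_sets reals.
From mathcomp Require Import lra.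
Set Implicit Arguments. Unset Strict Implicit. Unset Printing Implicit Defensive.
Import Order.TTheory GRing.Theory Num.Theory.
Local Open Scope ring_scope.

(* Write d_v(X) for distS [set v] X.  If v lies in M_p and x is the next vertex
   on a shortest path from v to loc p, then d_v(loc p) = w(v,x) + d_x(loc p)
   while d_v(loc q) <= w(v,x) + d_x(loc q) for every q, so the inequalities
   defining M_p at v transfer to x: the rest of the path stays in M_p.
   Normality puts loc p itself into M_p, since for a in loc p and q <> p,
   d_a(loc q) >= dist(loc q, loc p) > rad q - rad p.  Connectedness of M_p
   then follows by joining two of its vertices through their shortest paths
   to the connected set loc p. *)

Lemma seq_argmin (T : eqType) (d : Order.disp_t) (U : orderType d)
    (f : T -> U) (l : seq T) t :
  t \in l -> exists2 m, m \in l & forall y, y \in l -> (f m <= f y)%O.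
Proof.
elim: l t => [|a l IH] t //; rewrite in_cons => _.
case: l IH => [|b l] IH.
  by exists a; rewrite ?mem_head // => y; rewrite mem_seq1 => /eqP ->.
have [m hm H] := IH b (mem_head _ _).
case: (leP (f a) (f m)) => h.
  exists a; first exact: mem_head.
  by move=> y; rewrite in_cons => /orP[/eqP -> //|/H]; apply: le_trans.
exists m; first by rewrite in_cons hm orbT.
by move=> y; rewrite in_cons => /orP[/eqP -> |/H //]; apply: ltW.
Qed.

Fixpoint seqs_upto (T : finType) (n : nat) : seq (seq T) :=
  if n is n'.+1 then [::] :: [seq x :: s | x <- enum T, s <- seqs_upto T n']
  else [:: [::]].

Lemma mem_seqs_upto (T : finType) n (s : seq T) :
  (size s <= n)%N -> s \in seqs_upto T n.
Proof.
elim: n s => [|n IH] [|x s] //=; try by rewrite mem_head.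
move=> hs; rewrite in_cons; apply/orP; right.
by apply: (allpairs_f (fun x s => x :: s)); rewrite ?mem_enum // IH.
Qed.

Section Distances.
Variables (R : realType) (V : finType) (e : rel V) (w : V -> V -> R).
Hypothesis w_gt0 : forall x y, e x y -> 0 < w x y.
Hypothesis e_sym : symmetric e.
Hypothesis w_sym : forall x y, w x y = w y x.

Definition reaches (x : V) (X : {set V}) := exists s, path e x s /\ last x s \in X.

Lemma wt_cat u s1 s2 : wt w u (s1 ++ s2) = wt w u s1 + wt w (last u s1) s2.
Proof. by elim: s1 u => [|x s IH] u /=; rewrite ?add0r // IH addrA. Qed.

Lemma wt_rcons u s x : wt w u (rcons s x) = wt w u s + w (last u s) x.
Proof. by rewrite -cats1 wt_cat /= addr0. Qed.

Lemma wt_ge0 u s : path e u s -> 0 <= wt w u s.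
Proof.
elim: s u => [|x s IH] u //= /andP[hux hp].
by rewrite addr_ge0 ?IH // ltW ?w_gt0.
Qed.

Lemma path_rev_belast u s :
  path e u s ->
  [/\ path e (last u s) (rev (belast u s)), last (last u s) (rev (belast u s)) = u
    & wt w (last u s) (rev (belast u s)) = wt w u s].
Proof.
elim: s u => [|x s IH] u //= /andP[hux hp].
have [h1 h2 h3] := IH x hp.
rewrite rev_cons rcons_path last_rcons wt_rcons h1 h2 h3 e_sym hux.
by rewrite w_sym addrC.
Qed.

Lemma distS_le (X Y : {set V}) x s :
  x \in X -> path e x s -> last x s \in Y -> distS e w X Y <= wt w x s.
Proof.
move=> hx hp hl; apply: ge_inf; last by exists x, s.
by exists 0 => r [y [t [_ ht _ ->]]]; apply: wt_ge0.
Qed.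

Lemma distS_ge (X Y : {set V}) m :
  (exists x s, [/\ x \in X, path e x s & last x s \in Y]) ->
  (forall x s, x \in X -> path e x s -> last x s \in Y -> m <= wt w x s) ->
  m <= distS e w X Y.
Proof.
move=> [x [s [hx hp hl]]] H; apply: lb_le_inf; first by exists (wt w x s), x, s.
by move=> r [y [t [hy ht hl' ->]]]; apply: H.
Qed.

Lemma distS1_ge (X : {set V}) x m :
  reaches x X -> (forall s, path e x s -> last x s \in X -> m <= wt w x s) ->
  m <= distS e w [set x] X.
Proof.
move=> [s [hp hl]] H; apply: distS_ge; first by exists x, s; rewrite set11.
by move=> y t; rewrite inE => /eqP ->; apply: H.
Qed.

Lemma distS1_adj v x (X : {set V}) :
  e v x -> reaches x X -> distS e w [set v] X <= w v x + distS e w [set x] X.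
Proof.
move=> hvx hx; rewrite -lerBlDl; apply: distS1_ge => // s hp hl.
by rewrite lerBlDl (@distS_le _ _ v (x :: s)) ?set11 //= hvx.
Qed.

Lemma distS_le_distS1 (X Y : {set V}) a :
  a \in Y -> reaches a X -> distS e w X Y <= distS e w [set a] X.
Proof.
move=> ha hreach; apply: distS1_ge => // s hp hl.
have [r1 r2 r3] := path_rev_belast hp.
by rewrite -r3 distS_le // r2.
Qed.

Lemma shorten_path x s :
  path e x s -> exists t, [/\ path e x t, last x t = last x s,
    uniq (x :: t) & wt w x t <= wt w x s].
Proof.
elim: s x => [|y s IH] x /=; first by move=> _; exists [::].
move=> /andP[hxy hp]; have [t [ht hl hu hw]] := IH y hp.
have hpath : path e x (y :: t) by rewrite /= hxy.
case hin: (x \in y :: t); last first.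
  by exists (y :: t); split; rewrite /= ?lerD2l // -/(uniq (y :: t)) hu andbT hin.
have [a [b E]] : exists a b, y :: t = a ++ x :: b.
  by move: hin => /splitPr [a b]; exists a, b.
have hl' : last x b = last y s by rewrite -hl -[last y t]/(last x (y :: t)) E last_cat.
move: hpath hu; rewrite E cat_path => /andP[pa /= /andP[hax pb]] hu.
exists b; split => //; first by move: hu; rewrite cat_uniq => /and3P[].
apply: le_trans (_ : w x y + wt w y t <= _); last by rewrite lerD2l.
rewrite -[w x y + _]/(wt w x (y :: t)) E wt_cat /=.
have := wt_ge0 pa; have := w_gt0 hax; lra.
Qed.

(* Shortening makes every candidate path simple, so the infimum is over finitely many walks. *)
Lemma distS1_attained x (X : {set V}) :
  reaches x X -> exists s, [/\ path e x s, last x s \in X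
                              & wt w x s = distS e w [set x] X].
Proof.
move=> [s0 [hp0 hl0]].
pose cands := [seq t <- seqs_upto V #|V| | path e x t && (last x t \in X)].
have simple_cand t : path e x t -> last x t \in X ->
    exists2 t', t' \in cands & wt w x t' <= wt w x t.
  move=> ht hl; have [t' [ht' hl' hu hw]] := shorten_path ht.
  exists t' => //; rewrite mem_filter ht' hl' hl mem_seqs_upto //.
  by have := max_card (mem (x :: t')); move/card_uniqP: hu => -> /ltnW.
have [t1 ht1 _] := simple_cand _ hp0 hl0.
have [m hm m_min] := seq_argmin (wt w x) ht1.
move: (hm); rewrite mem_filter => /andP[/andP[hpm hlm] _].
exists m; split => //; apply: le_anti; rewrite distS_le ?set11 ?andbT //.
apply: distS1_ge; first by exists s0.
by move=> t ht hl; have [t' ht' hw] := simple_cand _ ht hl; apply: le_trans (m_min _ ht') hw.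
Qed.

Lemma shortest_to_cons v x s (X : {set V}) :
  reaches x X -> shortest_to e w v X (x :: s) ->
  shortest_to e w x X s /\ distS e w [set v] X = w v x + distS e w [set x] X.
Proof.
move=> hx [/= /andP[hvx hp] hl hw].
have hadj := distS1_adj hvx hx.
have hle : distS e w [set x] X <= wt w x s by rewrite distS_le ?set11.
have hs : wt w x s = distS e w [set x] X by apply/eqP; rewrite eq_le hle; lra.
by split; [split | lra].
Qed.

Variables (O : finType) (loc : O -> {set V}) (rad : O -> R) (F : {set O}).
Hypothesis reaches_loc : forall x q, reaches x (loc q).

Local Notation cell := (voronoi e w loc rad F).

Lemma in_voronoi p v :
  v \in cell p <->
  (p \in F /\ forall q, q \in F ->
     distS e w [set v] (loc p) - rad p <= distS e w [set v] (loc q) - rad q).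
Proof. by rewrite inE; split => [/asboolP|/asboolP]. Qed.

Lemma voronoi_shortest_to p v s :
  v \in cell p -> shortest_to e w v (loc p) s -> all (mem (cell p)) (v :: s).
Proof.
elim: s v => [|x s IH] v hv hs /=; first by rewrite hv.
rewrite hv /=; have [hxs hdv] := shortest_to_cons (reaches_loc x p) hs.
apply: IH hxs; have [hp hvp] := proj1 (in_voronoi p v) hv.
apply/in_voronoi; split => // q hq.
have := hvp q hq; have [/= /andP[hvx _] _ _] := hs.
have := distS1_adj hvx (reaches_loc x q); lra.
Qed.

Hypothesis F_normal : normal e w loc rad F.

Lemma loc_sub_voronoi p a : p \in F -> a \in loc p -> a \in cell p.
Proof.
move=> hp ha; apply/in_voronoi; split => // q hq.
have ha0 : distS e w [set a] (loc p) <= 0 by rewrite (@distS_le _ _ a [::]) ?set11.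
have [->|hqp] := eqVneq q p; first exact: le_refl.
have [_ hrad] := F_normal hq hp hqp.
have := distS_le_distS1 ha (reaches_loc a q); lra.
Qed.

Lemma voronoi_connected p :
  p \in F -> induces_connected e (loc p) -> induces_connected e (cell p).
Proof.
move=> hp loc_conn x y hx hy.
have to_loc z : z \in cell p ->
    exists s, [/\ path e z s, last z s \in loc p & all (mem (cell p)) (z :: s)].
  move=> hz; have [s [h1 h2 h3]] := distS1_attained (reaches_loc z p).
  by exists s; split => //; apply: voronoi_shortest_to.
have [sx [px lx /= /andP[_ ax]]] := to_loc x hx.
have [sy [py ly ay]] := to_loc y hy.
have [t [[pt lt] at_]] := loc_conn _ _ lx ly.
have [r1 r2 _] := path_rev_belast py.
exists (sx ++ t ++ rev (belast y sy)); split; first split.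
- by rewrite !cat_path px pt lt r1.
- by rewrite !last_cat lt r2.
rewrite !all_cat ax /=; apply/andP; split.
- by apply/allP => z hz; apply: (loc_sub_voronoi hp); apply: (allP at_).
- by rewrite all_rev; apply/allP => z /mem_belast; apply: (allP ay).
Qed.

End Distances.

Theorem lemma4p2 (R : realType) (V : finType) (e : rel V) (w : V -> V -> R)
  (O : finType) (loc : O -> {set V}) (rad : O -> R) (F : {set O}) :
  weighted_connected_graph e w ->
  valid_objects e loc rad ->
  generic e w rad ->
  normal e w loc rad F ->
  forall p, p \in F ->
    (forall v s, v \in voronoi e w loc rad F p ->
       shortest_to e w v (loc p) s ->
       all (fun z => z \in voronoi e w loc rad F p) (v :: s)) /\
    induces_connected e (voronoi e w loc rad F p).
Proof.
move=> [e_sym _ w_sym w_gt0 conn] valid _ hnormal p hp.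
have reaches_loc x q : reaches e x (loc q).
  have [[a ha] _ _] := valid q; have [s [hs hl]] := conn x a.
  by exists s; rewrite hl.
have [_ loc_conn _] := valid p.
split; first by move=> v s; apply: voronoi_shortest_to.
exact: voronoi_connected.
Qed.
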